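(* Let $B = M \cup \{\omega_1,\ldots,\omega_p\}$ with $p\ge1$ and $\omega_i\in P_2\setminus M$, let $r(B)=\max\{d(\omega_1),\ldots,d(\omega_p)\}$ and $c(B)=\log_2(2r(B)+1)+1$. Then for every finite system $F$ of Boolean functions of variables $x_1,\ldots,x_n$, $$I_B(F)\ge \left\lceil \log_2(d(F)+1)\right\rceil - c(B).$$
   Context: $P_2$ denotes the set of all Boolean functions and $M\subset P_2$ the set of all monotone Boolean functions (including the constants). Tuples in $\{0,1\}^n$ are compared componentwise. An increasing chain is a sequence of pairwise distinct tuples $\tilde\alpha_1,\ldots,\tilde\alpha_r\in\{0,1\}^n$ with $\tilde\alpha_i\le\tilde\alpha_{i+1}$ for all $i$. For a Boolean function $f$, a pair $(\tilde\alpha,\tilde\beta)$ with $\tilde\alpha\le\tilde\beta$ and $f(\tilde\alpha)>f(\tilde\beta)$ is a jump of $f$; a pair is a jump of a system $F$ if it is a jump of some $f\in F$. For a chain $C=(\tilde\alpha_1,\ldots,\tilde\alpha_r)$, $d_C(F)$ is the number of $i$ with $(\tilde\alpha_i,\tilde\alpha_{i+1})$ a jump of $F$, and $d(F)=\max_C d_C(F)$ over all chains; $d(f)=d(\{f\})$. A circuit over $B$ is a Boolean circuit with inputs $x_1,\ldots,x_n$ whose gates compute functions of $B$; gates computing functions in $M$ have weight $0$ and gates computing some $\omega_i$ have weight $1$. $I_B(F)$ is the minimum total weight of a circuit over $B$ realizing all functions of $F$. *)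

From Stdlib Require Import Reals.
From mathcomp Require Import all_boot.
Set Implicit Arguments. Unset Strict Implicit. Unset Printing Implicit Defensive.

Definition btuple (n : nat) := {ffun 'I_n -> bool}.
Definition bfun (n : nat) := btuple n -> bool.

Definition leT n (a b : btuple n) : bool := [forall i, a i ==> b i].

Definition monotone n (f : bfun n) : Prop := forall a b, leT a b -> f a ==> f b.

Definition jump n (f : bfun n) (a b : btuple n) : bool := leT a b && (f a && ~~ f b).
Definition jumpF n m (F : 'I_m -> bfun n) (a b : btuple n) : bool :=
  [exists j, jump (F j) a b].

Definition chain n (s : seq (btuple n)) : bool := uniq s && sorted (@leT n) s.

Definition dC n m (F : 'I_m -> bfun n) (s : seq (btuple n)) : nat :=
  count (fun ab => jumpF F ab.1 ab.2) (zip s (behead s)).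

(* d(F) = max over all chains; a chain has at most #|btuple n| = 2^n elements,
   so the max over chains of all lengths k <= 2^n covers all chains. *)
Definition dsys n m (F : 'I_m -> bfun n) : nat :=
  \max_(k < (2 ^ n).+1) \max_(t : k.-tuple (btuple n) | chain t) dC F t.

Definition dfun n (f : bfun n) : nat := dsys (fun _ : 'I_1 => f).

Section Circuits.
Variables (p : nat) (ar : 'I_p -> nat).
Unset Implicit Arguments.
Variable om : forall i : 'I_p, bfun (ar i).
Set Implicit Arguments.

Inductive gkind :=
  | MonoG (k : nat) (g : bfun k)
  | OmG (i : 'I_p).

Definition garity (kd : gkind) : nat :=
  match kd with MonoG k _ => k | OmG i => ar i end.

Record gate := Gate { kind : gkind; wires : seq nat }.

(* nodes: 0..n-1 are the inputs x_1..x_n, n+j is the j-th gate *)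
Definition gapply (g : gate) (vals : seq bool) : bool :=
  let v := fun l : nat => nth false vals (nth 0 (wires g) l) in
  match kind g with
  | MonoG k h => h [ffun l : 'I_k => v l]
  | OmG i => om i [ffun l : 'I_(ar i) => v l]
  end.

Definition circuit := seq gate.

Definition gate0 : gate := Gate (MonoG (fun _ : btuple 0 => false)) [::].

Definition kind_ok (kd : gkind) : Prop :=
  match kd with MonoG k h => monotone h | OmG _ => True end.

Definition wf_gate (n j : nat) (g : gate) : Prop :=
  [/\ size (wires g) = garity (kind g),
      all (fun w => w < n + j) (wires g)
    & kind_ok (kind g)].

Definition wf_circuit (n : nat) (C : circuit) : Prop :=
  forall j, j < size C -> wf_gate n j (nth gate0 C j).

Definition eval (n : nat) (C : circuit) (x : btuple n) : seq bool :=
  foldl (fun vals g => rcons vals (gapply g vals)) [seq x i | i <- enum 'I_n] C.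

Definition realizes (n m : nat) (C : circuit) (F : 'I_m -> bfun n) : Prop :=
  forall j : 'I_m, exists2 v, v < n + size C &
    forall x, nth false (eval C x) v = F j x.

Definition weight (C : circuit) : nat :=
  count (fun g => if kind g is OmG _ then true else false) C.
End Circuits.

Definition rB (p : nat) (ar : 'I_p -> nat) (om : forall i, bfun (ar i)) : nat :=
  \max_(i < p) dfun (om i).

Definition log2 (x : R) : R := Rdiv (ln x) (ln 2).
(* ceiling: -floor(-x), Int_part being the floor *)
Definition Rceil (x : R) : Z := Z.opp (Int_part (Ropp x)).

Definition cB (p : nat) (ar : 'I_p -> nat) (om : forall i, bfun (ar i)) : R :=
  Rplus (log2 (Rplus (Rmult 2 (INR (rB om))) 1)) 1.

(* Call a pair a <= b of inputs bad for a circuit if some node drops from 1 to 0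
   between a and b.  Every jump of F is bad, so d(F) is bounded by the number of
   bad consecutive pairs along a chain.  A circuit without [om]-gates is monotone
   and has no bad pairs.  Otherwise let g be its first [om]-gate: the inputs of g
   depend monotonically on x, so along a chain g changes value at most
   2 r(B) + 1 times, and between two changes the circuit agrees with the one in
   which g is frozen to a constant, which has one [om]-gate less.  By induction a
   circuit of weight w has at most (2 r(B) + 1)(2^w - 1) bad pairs along a chain,
   so d(F) + 1 <= (2 r(B) + 1) 2^w; now take logarithms. *)

From Stdlib Require Import Reals Lra.
From mathcomp Require Import all_boot.
From mathcomp Require Import zify.
Set Implicit Arguments. Unset Strict Implicit. Unset Printing Implicit Defensive.

Section AdjacentSums.
Variable T : Type.
Implicit Types (w : T -> T -> nat) (s : seq T) (f : T -> bool).

Fixpoint adjsum w s : nat :=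
  if s is x :: s' then (if s' is y :: _ then w x y else 0) + adjsum w s' else 0.

Lemma adjsum_cons2 w x y s : adjsum w [:: x, y & s] = w x y + adjsum w (y :: s).
Proof. by []. Qed.

Lemma adjsum_sorted_le (R : rel T) w w' s :
  (forall a b, R a b -> w a b <= w' a b) -> sorted R s -> adjsum w s <= adjsum w' s.
Proof.
move=> le_w; elim: s => //= x [|y s] IH //= /andP[Rxy Rs].
by rewrite leq_add ?le_w ?IH.
Qed.

Lemma adjsum_le w w' s : (forall a b, w a b <= w' a b) -> adjsum w s <= adjsum w' s.
Proof.
move=> le_w; apply: (@adjsum_sorted_le (fun _ _ => true)) => //.
by elim: s => //= x [|y s].
Qed.

Lemma adjsum0 s : adjsum (fun _ _ => 0) s = 0.
Proof. by elim: s => //= x s ->; case: s. Qed.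

Lemma adjsumD w w' s :
  adjsum (fun a b => w a b + w' a b) s = adjsum w s + adjsum w' s.
Proof. by elim: s => //= x s ->; case: s => [|y s] /=; lia. Qed.

Lemma adjsum_filter f w s :
  adjsum (fun a b => if f a && f b then w a b else 0) s <= adjsum w (filter f s).
Proof.
elim: s => //= x s IH; case fx: (f x) => /=; last by case: s IH.
case: s IH => [|y s] //=; case fy: (f y) => /= IH; first by rewrite leq_add2l.
by apply: leq_trans IH _; case: (filter f s) => //= z t; rewrite leq_addl.
Qed.

Lemma adjsum_partition f w (w' : bool -> T -> T -> nat) s :
  (forall a b, f a != f b -> w a b <= 1) ->
  (forall a b, f a = f b -> w a b <= w' (f a) a b) ->
  adjsum w s <= adjsum (fun a b => f a != f b) s +
                adjsum (w' true) (filter f s) + adjsum (w' false) (filter (predC f) s).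
Proof.
move=> w_change w_same.
apply: leq_trans (_ : adjsum (fun a b => (f a != f b) +
          (if f a && f b then w' true a b else 0) +
          (if predC f a && predC f b then w' false a b else 0)) s <= _).
  apply: adjsum_le => a b /=; have := w_same a b; have := w_change a b.
  by case: (f a); case: (f b) => /= ch sm; rewrite ?addn0 ?add0n ?ch ?sm.
by rewrite !adjsumD !leq_add ?adjsum_filter.
Qed.

(* Along any sequence, the rises of [f] and its falls alternate. *)
Lemma adjsum_rises_le f x s :
  adjsum (fun a b => ~~ f a && f b) (x :: s) + f x <=
  adjsum (fun a b => f a && ~~ f b) (x :: s) + 1.
Proof.
elim: s x => [|y s IH] x /=; first by case: (f x).
by have /= := IH y; case: (f x); case: (f y) => /=; lia.
Qed.

Lemma adjsum_changes f s :
  adjsum (fun a b => f a != f b) s <= (adjsum (fun a b => f a && ~~ f b) s).*2 + 1.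
Proof.
case: s => [|x s] //.
apply: leq_trans (_ : adjsum (fun a b => (f a && ~~ f b) + (~~ f a && f b)) (x :: s) <= _).
  by apply: adjsum_le => a b; case: (f a); case: (f b).
have := adjsum_rises_le f x s; rewrite adjsumD -addnn; lia.
Qed.

Lemma adjsum_count (P : T -> T -> bool) s :
  adjsum (fun a b => P a b : nat) s = count (fun ab => P ab.1 ab.2) (zip s (behead s)).
Proof. by elim: s => //= x s ->; case: s. Qed.

End AdjacentSums.

Lemma adjsum_map (T U : Type) (h : T -> U) (w : U -> U -> nat) s :
  adjsum w (map h s) = adjsum (fun a b => w (h a) (h b)) s.
Proof. by elim: s => //= x s ->; case: s. Qed.

Section Compress.
Variable T : eqType.

Fixpoint compress (s : seq T) : seq T :=
  if s is x :: s' then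
    if s' is y :: _ then (if x == y then compress s' else x :: compress s') else [:: x]
  else [::].

Lemma compress_cons (y : T) s : exists t, compress (y :: s) = y :: t.
Proof.
elim: s y => [|z s IH] y /=; first by exists [::].
by case: eqP => [<-|_]; [exact: IH | eexists].
Qed.

Lemma compress_cons2 (x y : T) s :
  compress [:: x, y & s] = if x == y then compress (y :: s) else x :: compress (y :: s).
Proof. by []. Qed.

Lemma sorted_compress (R : rel T) s :
  sorted R s -> sorted (fun a b => R a b && (a != b)) (compress s).
Proof.
elim: s => // x [|y s] IH // /andP[Rxy Rs]; rewrite compress_cons2.
case: eqP => [_|/eqP nxy]; first exact: IH.
have [t Et] := compress_cons y s; move: (IH Rs); rewrite Et /= => ->.
by rewrite Rxy nxy.
Qed.

Lemma adjsum_compress (w : T -> T -> nat) s :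
  (forall a, w a a = 0) -> adjsum w (compress s) = adjsum w s.
Proof.
move=> w0; elim: s => // x [|y s] IH //; rewrite compress_cons2.
have [t Et] := compress_cons y s.
case: eqP => [->|_]; first by rewrite adjsum_cons2 w0 IH.
by rewrite Et !adjsum_cons2 -Et IH.
Qed.

End Compress.

Lemma leT_trans n : transitive (@leT n).
Proof.
move=> b a c /forallP le_ab /forallP le_bc; apply/forallP => i.
by apply/implyP => /(implyP (le_ab i)) /(implyP (le_bc i)).
Qed.

Lemma leT_anti n (a b : btuple n) : leT a b -> leT b a -> a = b.
Proof.
move=> /forallP le_ab /forallP le_ba; apply/ffunP => i.
by move: (le_ab i) (le_ba i); case: (a i); case: (b i).
Qed.

Lemma dC_le_dsys n m (F : 'I_m -> bfun n) (t : seq (btuple n)) :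
  chain t -> dC F t <= dsys F.
Proof.
move=> ch_t; have size_t : size t < (2 ^ n).+1.
  case/andP: ch_t => /card_uniqP <- _; rewrite ltnS.
  by apply: leq_trans (max_card _) _; rewrite card_ffun card_bool card_ord.
apply: leq_trans (leq_bigmax_cond (Ordinal size_t) isT).
exact: (@leq_bigmax_cond _ (fun u : (size t).-tuple _ => chain u) _ (in_tuple t)).
Qed.

Lemma dsys_le_sorted n m (F : 'I_m -> bfun n) (N : nat) :
  (forall t : seq (btuple n), sorted (@leT n) t -> dC F t <= N) -> dsys F <= N.
Proof.
by move=> le_N; apply/bigmax_leqP => k _; apply/bigmax_leqP => t /andP[_ /le_N].
Qed.

Lemma chain_compress n (s : seq (btuple n)) : sorted (@leT n) s -> chain (compress s).
Proof.
move=> /sorted_compress lt_s; apply/andP; split; last first.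
  by apply: sub_sorted lt_s => a b /andP[].
apply: sorted_uniq lt_s => [b a c /andP[le_ab ne_ab] /andP[le_bc _]|a].
  rewrite (leT_trans le_ab le_bc); apply: contra ne_ab => /eqP eq_ac.
  by rewrite eq_ac in le_ab *; rewrite (leT_anti le_bc le_ab).
by rewrite eqxx andbF.
Qed.

(* Repetitions do not count as jumps, so a weakly increasing sequence may be
   compressed into a chain. *)
Lemma adjsum_falls_le_dfun k (g : bfun k) (s : seq (btuple k)) :
  sorted (@leT k) s -> adjsum (fun a b => g a && ~~ g b : nat) s <= dfun g.
Proof.
move=> le_s; rewrite -adjsum_compress; last by move=> a; rewrite andbN.
apply: leq_trans (dC_le_dsys _ (chain_compress le_s)).
rewrite /dC -adjsum_count; apply: (adjsum_sorted_le _ (sorted_compress le_s)).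
move=> a b /andP[le_ab _]; case: (boolP (g a && ~~ g b)) => //= fall.
suff -> : jumpF (fun _ : 'I_1 => g) a b by [].
by apply/existsP; exists ord0; rewrite /jump le_ab fall.
Qed.

Lemma dfun_le_rB p (ar : 'I_p -> nat) (om : forall i, bfun (ar i)) i :
  dfun (om i) <= rB om.
Proof. exact: (@leq_bigmax_cond _ (fun _ => true) (fun j => dfun (om j)) i). Qed.

Lemma adjsum_changes_le_rB p (ar : 'I_p -> nat) (om : forall i, bfun (ar i)) i n
    (y : btuple n -> btuple (ar i)) (s : seq (btuple n)) :
  {homo y : a b / leT a b} -> sorted (@leT n) s ->
  adjsum (fun a b => om i (y a) != om i (y b)) s <= 2 * rB om + 1.
Proof.
move=> y_mono le_s; apply: leq_trans (adjsum_changes _ _) _.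
rewrite -mul2n leq_add2r leq_mul2l /=.
rewrite -(adjsum_map y (fun a b => om i a && ~~ om i b : nat)).
apply: leq_trans (dfun_le_rB om i).
by apply: adjsum_falls_le_dfun; rewrite sorted_map; apply: sub_sorted le_s.
Qed.

Section Evaluation.
Variables (p : nat) (ar : 'I_p -> nat) (om : forall i : 'I_p, bfun (ar i)) (n : nat).
Implicit Types (C : circuit p) (x a b : btuple n).

Definition is_om (g : gate p) : bool := if kind g is OmG _ then true else false.

Lemma weightE C : weight C = count is_om C.
Proof. by []. Qed.

Lemma eval_rcons C g x : eval om (rcons C g) x = rcons (eval om C x) (gapply om g (eval om C x)).
Proof. by rewrite /eval foldl_rcons. Qed.

Lemma size_eval C x : size (eval om C x) = n + size C.
Proof.
elim/last_ind: C => [|C g IH]; first by rewrite /eval size_map size_enum_ord addn0.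
by rewrite eval_rcons !size_rcons IH addnS.
Qed.

Lemma nth_eval_input x v (v_lt_n : v < n) : nth false (eval om [::] x) v = x (Ordinal v_lt_n).
Proof.
rewrite /eval /= (nth_map (Ordinal v_lt_n)) ?size_enum_ord //.
by congr (fun_of_fin x); apply: val_inj; rewrite /= nth_enum_ord.
Qed.

Lemma eval_cat_gate C1 C2 g g' x :
  gapply om g (eval om C1 x) = gapply om g' (eval om C1 x) ->
  eval om (C1 ++ g :: C2) x = eval om (C1 ++ g' :: C2) x.
Proof. by move=> eq_g; rewrite /eval !foldl_cat /= -/(eval om C1 x) eq_g. Qed.

Definition node_mono C a b v : bool := nth false (eval om C a) v ==> nth false (eval om C b) v.

Definition mono_pair C a b : bool := all (node_mono C a b) (iota 0 (n + size C)).

Lemma wf_circuit_rcons C g : wf_circuit ar n (rcons C g) ->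
  wf_circuit ar n C /\ wf_gate ar n (size C) g.
Proof.
move=> wf_Cg; split=> [j lt_j|].
  by have := wf_Cg j; rewrite size_rcons nth_rcons lt_j ltnS ltnW //; exact.
by have := wf_Cg (size C); rewrite size_rcons nth_rcons ltnn eqxx ltnSn; exact.
Qed.

Lemma node_mono_from_om C a b : wf_circuit ar n C -> leT a b ->
  (forall j, j < size C -> is_om (nth (gate0 p) C j) -> node_mono C a b (n + j)) ->
  forall v, node_mono C a b v.
Proof.
elim/last_ind: C => [|C g IH] wf_C le_ab om_mono v.
  rewrite /node_mono; case: (ltnP v n) => [v_lt_n|v_ge_n].
    by rewrite !(nth_eval_input _ v_lt_n); move/forallP: le_ab; apply.
  by rewrite nth_default // size_eval addn0.
have [wf_C' [_ _ kind_g]] := wf_circuit_rcons wf_C.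
have mono_C : forall v, node_mono C a b v.
  apply: IH => // j lt_j om_j; have := om_mono j.
  rewrite size_rcons nth_rcons lt_j ltnS ltnW // => /(_ isT om_j).
  by rewrite /node_mono !eval_rcons !nth_rcons !size_eval ltn_add2l lt_j.
rewrite /node_mono !eval_rcons !nth_rcons !size_eval.
case: ifP => [_|_]; first exact: mono_C.
case: eqP => // _; clear wf_C; case: g kind_g om_mono => -[k h|i] ws /= h_mono om_mono.
  by apply: h_mono; apply/forallP => l; rewrite !ffunE; apply: mono_C.
have := om_mono (size C); rewrite size_rcons ltnSn nth_rcons ltnn eqxx => /(_ isT isT).
by rewrite /node_mono !eval_rcons !nth_rcons !size_eval ltnn eqxx.
Qed.

Lemma node_mono_weight0 C a b : weight C = 0 -> wf_circuit ar n C -> leT a b ->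
  forall v, node_mono C a b v.
Proof.
move=> w0 wf_C le_ab; apply: node_mono_from_om => // j lt_j om_j.
suff : has is_om C by rewrite has_count -weightE w0.
by apply/(has_nthP (gate0 p)); exists j.
Qed.

End Evaluation.

Section FirstOmGate.
Variables (p : nat) (ar : 'I_p -> nat).
Unset Implicit Arguments.
Variable om : forall i : 'I_p, bfun (ar i).
Set Implicit Arguments.
Variable n : nat.
Implicit Types (C : circuit p) (x a b : btuple n).

Lemma split_first_om C k : weight C = k.+1 ->
  exists C1 i ws C2, [/\ C = C1 ++ Gate (OmG i) ws :: C2, weight C1 = 0 & weight C2 = k].
Proof.
move=> wC; have has_om : has (@is_om p) C by rewrite has_count -weightE wC.
set j := find (@is_om p) C; have lt_j : j < size C by rewrite -has_find.
have def_C : C = take j C ++ nth (gate0 p) C j :: drop j.+1 C.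
  by rewrite -drop_nth // cat_take_drop.
have w1 : weight (take j C) = 0.
  by apply/eqP; rewrite eqn0Ngt -has_count has_take_leq ?ltnn // ltnW.
move: def_C (nth_find (gate0 p) has_om); rewrite -/j.
case: (nth _ C j) => -[//|i] ws def_C _; exists (take j C), i, ws, (drop j.+1 C).
split=> //; move: wC; rewrite {1}def_C !weightE count_cat /= -!weightE w1; lia.
Qed.

Variables (C1 C2 : circuit p) (i : 'I_p) (ws : seq nat).
Let C := C1 ++ Gate (OmG i) ws :: C2.
Hypothesis wf_C : wf_circuit ar n C.

Definition freeze (c : bool) : circuit p :=
  C1 ++ Gate (MonoG p (fun _ : btuple (ar i) => c)) ws :: C2.

Definition om_input x : btuple (ar i) :=
  [ffun l : 'I_(ar i) => nth false (eval om C1 x) (nth 0 ws l)].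

Lemma weight_freeze c : weight (freeze c) = weight C1 + weight C2.
Proof. by rewrite !weightE count_cat. Qed.

Lemma wf_freeze c : wf_circuit ar n (freeze c).
Proof.
move=> j; have := @wf_C j; rewrite /freeze !size_cat /= => wf_j lt_j.
move: (wf_j lt_j); rewrite !nth_cat; case: ifP => // _.
by case: (j - size C1) => //= -[size_ws wires_lt _]; split=> // a b _; apply: implybb.
Qed.

Lemma eval_freeze x : eval om C x = eval om (freeze (om i (om_input x))) x.
Proof. exact: eval_cat_gate. Qed.

Lemma mono_pair_freeze c a b : om i (om_input a) = c -> om i (om_input b) = c ->
  mono_pair om C a b = mono_pair om (freeze c) a b.
Proof.
move=> om_a om_b; have size_C : size (freeze c) = size C by rewrite !size_cat.
by rewrite /mono_pair /node_mono size_C !eval_freeze om_a om_b.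
Qed.

Lemma om_input_mono : weight C1 = 0 -> {homo om_input : a b / leT a b}.
Proof.
have wf_C1 : wf_circuit ar n C1.
  move=> j lt_j; have := @wf_C j; rewrite size_cat /= nth_cat lt_j.
  by apply; apply: leq_trans lt_j (leq_addr _ _).
move=> w1 a b le_ab; apply/forallP => l; rewrite !ffunE.
exact: node_mono_weight0.
Qed.

End FirstOmGate.

Section Bound.
Variables (p : nat) (ar : 'I_p -> nat).
Unset Implicit Arguments.
Variable om : forall i : 'I_p, bfun (ar i).
Set Implicit Arguments.
Variable n : nat.

Lemma adjsum_nonmono_le (C : circuit p) (s : seq (btuple n)) :
  wf_circuit ar n C -> sorted (@leT n) s ->
  adjsum (fun a b => ~~ mono_pair om C a b : nat) s <= (2 * rB om + 1) * (2 ^ weight C - 1).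
Proof.
move Ek: (weight C) => k; elim: k C Ek s => [|k IH] C wC s wf_C le_s.
  rewrite muln0 -(adjsum0 s); apply: (adjsum_sorted_le _ le_s) => a b le_ab.
  suff -> : mono_pair om C a b by [].
  by apply/allP => v _; apply: node_mono_weight0.
have [C1 [i [ws [C2 [def_C w1 w2]]]]] := split_first_om wC; subst C.
pose f (x : btuple n) := om i (om_input om C1 i ws x).
pose frozen (c : bool) (a b : btuple n) := ~~ mono_pair om (freeze ar C1 C2 i ws c) a b : nat.
have le_frozen (c : bool) (t : seq (btuple n)) : sorted (@leT n) t ->
    adjsum (frozen c) t <= (2 * rB om + 1) * (2 ^ k - 1).
  by apply: IH; [rewrite weight_freeze w1 w2 | exact: wf_freeze].
apply: leq_trans (@adjsum_partition _ f _ frozen s _ _) _.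
- by move=> a b _; rewrite leq_b1.
- by move=> a b fab; rewrite /frozen (mono_pair_freeze _ (erefl (f a)) (esym fab)).
have := le_frozen true _ (sorted_filter (@leT_trans n) f le_s).
have := le_frozen false _ (sorted_filter (@leT_trans n) (predC f) le_s).
have := adjsum_changes_le_rB om (om_input_mono om wf_C w1) le_s.
have : 0 < 2 ^ k by rewrite expn_gt0.
rewrite /f /= expnS; nia.
Qed.

Lemma mono_pair_jumpF m (F : 'I_m -> bfun n) (C : circuit p) a b :
  realizes om C F -> jumpF F a b -> ~~ mono_pair om C a b.
Proof.
move=> CF /existsP[j /and3P[_ Fa nFb]]; have [v lt_v Fv] := CF j.
apply/allPn; exists v; first by rewrite mem_iota.
by rewrite /node_mono !Fv Fa (negbTE nFb).
Qed.

Lemma dsys_le_weight m (F : 'I_m -> bfun n) (C : circuit p) :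
  wf_circuit ar n C -> realizes om C F ->
  dsys F + 1 <= (2 * rB om + 1) * 2 ^ weight C.
Proof.
move=> wf_C CF; suff : dsys F <= (2 * rB om + 1) * (2 ^ weight C - 1).
  have : 0 < 2 ^ weight C by rewrite expn_gt0.
  nia.
apply: dsys_le_sorted => t le_t; rewrite /dC -adjsum_count.
apply: leq_trans (adjsum_nonmono_le wf_C le_t).
by apply: adjsum_le => a b; case: (boolP (jumpF F a b)) => // /(mono_pair_jumpF CF) ->.
Qed.

End Bound.

Section RealBounds.
Local Open Scope R_scope.

Lemma INR_exp2n (k : nat) : INR (2 ^ k)%N = 2 ^ k.
Proof. by elim: k => // k IH; rewrite expnS -multE mult_INR IH /=; ring. Qed.

Lemma Rceil_lt (y : R) : IZR (Rceil y) < y + 1.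
Proof. by rewrite /Rceil opp_IZR; case: (base_Int_part (- y)) => ? ?; lra. Qed.

Lemma log2_le_mul_pow (x K : R) (w : nat) :
  0 < x -> x <= K * 2 ^ w -> log2 x <= log2 K + INR w.
Proof.
move=> x_gt0 le_x; have ln2_gt0 : 0 < ln 2 by rewrite -ln_1; apply: ln_increasing; lra.
have pow_gt0 : 0 < 2 ^ w by apply: pow_lt; lra.
have K_gt0 : 0 < K by apply: (Rmult_lt_reg_r (2 ^ w)); lra.
have : ln x <= ln K + INR w * ln 2.
  rewrite -ln_pow -?ln_mult //; try lra.
  by case: (Rle_lt_or_eq_dec _ _ le_x) => [/(ln_increasing _ _ x_gt0)|->]; lra.
rewrite /log2 => le_ln; apply: (Rmult_le_reg_r (ln 2)) => //.
by rewrite Rmult_plus_distr_r !Rdiv_def !Rmult_assoc Rinv_l; lra.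
Qed.

Lemma ceil_log2_le (d r w : nat) : (d + 1 <= (2 * r + 1) * 2 ^ w)%N ->
  INR w >= IZR (Rceil (log2 (INR d + 1))) - (log2 (2 * INR r + 1) + 1).
Proof.
move=> /leP /le_INR; rewrite -!multE -!plusE mult_INR INR_exp2n !plus_INR /=.
rewrite (_ : INR r + (INR r + 0) + 1 = 2 * INR r + 1); last by ring.
move=> /(log2_le_mul_pow (Rplus_le_lt_0_compat _ _ (pos_INR d) Rlt_0_1)).
by have := Rceil_lt (log2 (INR d + 1)); lra.
Qed.

End RealBounds.

Unset Implicit Arguments.
Theorem lemma2 (p : nat) (hp : 0 < p) (ar : 'I_p -> nat)
    (om : forall i : 'I_p, bfun (ar i))
    (hom : forall i : 'I_p, ~ monotone (om i))
    (n m : nat) (F : 'I_m -> bfun n) (C : circuit p)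
    (hC : wf_circuit ar n C) (hCF : realizes om C F) :
  Rge (INR (weight C)) (Rminus (IZR (Rceil (log2 (Rplus (INR (dsys F)) 1)))) (cB om)).
Proof. exact: ceil_log2_le (dsys_le_weight hC hCF). Qed.
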